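(* Let $X\in L_2^p(P)$ be centered with $\Sigma=\mathrm{Cov}(X)$, let $\varepsilon\in L_2^q(P)$ be centered with $V=\mathrm{Cov}(\varepsilon)$ and stochastically independent of $X$, let $Z\in\mathbb R^{q\times p}$ and $Y=ZX+\varepsilon$. Put $B=Z\Sigma Z^\tau$, $C=B+V$, $K=\Sigma Z^\tau C^-$ and $Z^\Sigma=\Sigma Z^\tau B^-$. Then, regardless of the ranks of $Z$ or $B$, $\mathrm{oP}(\varepsilon\,|\,Y)=(I_q-ZK)Y$ and $$\mathrm{oP}(X\,|\,Y)=Z^\Sigma\big(Y-\mathrm{oP}(\varepsilon\,|\,Y)\big)\quad\text{almost surely},$$ where $\mathrm{oP}(X\,|\,Y)=KY$.
   Context: $M^-$ denotes the Moore–Penrose generalized inverse of a matrix $M$. For random vectors $a,b$ in $L_2$, $\mathrm{oP}(a\,|\,b)$ denotes the best linear reconstruction of $a$ by means of $b$, i.e. the componentwise orthogonal $L_2$-projection of $a$ onto the closed linear span of the components of $b$ (for centered vectors, $\mathrm{oP}(a|b)=\mathrm{Cov}(a,b)\mathrm{Cov}(b)^-b$). $I_q$ is the $q\times q$ identity. *)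

From HB Require Import structures.
From mathcomp Require Import all_boot all_order all_algebra.
From Stdlib Require Import ClassicalEpsilon.
Set Implicit Arguments. Unset Strict Implicit. Unset Printing Implicit Defensive.
Import Order.TTheory GRing.Theory Num.Theory.
Local Open Scope ring_scope.

Definition is_MP (R : realFieldType) (m n : nat)
    (A : 'M[R]_(m, n)) (G : 'M[R]_(n, m)) : Prop :=
  [/\ A *m G *m A = A, G *m A *m G = G,
      (A *m G)^T = A *m G & (G *m A)^T = G *m A].

(* The Moore-Penrose inverse M^- (chosen among matrices satisfying the
   Penrose conditions; it exists and is unique). *)
Definition mpinv (R : realFieldType) (m n : nat) (A : 'M[R]_(m, n)) : 'M[R]_(n, m) :=
  epsilon (inhabits 0) (fun G => is_MP A G).

(* Model of centered L_2(P): a real vector space H with the (semi-definite)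
   inner product ip a b = E[a b].  Random vectors in L_2^n are 'I_n -> H. *)
Definition is_L2 (R : realFieldType) (H : lmodType R) (ip : H -> H -> R) : Prop :=
  [/\ (forall (a : R) (x y z : H), ip (a *: x + y) z = a * ip x z + ip y z),
      (forall x y : H, ip x y = ip y x)
    & (forall x : H, 0 <= ip x x)].

Definition Cov (R : realFieldType) (H : lmodType R) (ip : H -> H -> R)
    (m n : nat) (a : 'I_m -> H) (b : 'I_n -> H) : 'M[R]_(m, n) :=
  \matrix_(i, j) ip (a i) (b j).

Definition mxapp (R : realFieldType) (H : lmodType R) (m n : nat)
    (A : 'M[R]_(m, n)) (x : 'I_n -> H) : 'I_m -> H :=
  fun i => \sum_j A i j *: x j.

Definition in_span (R : realFieldType) (H : lmodType R) (n : nat)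
    (b : 'I_n -> H) (h : H) : Prop :=
  exists c : 'I_n -> R, h = \sum_j c j *: b j.

(* pa is (a version of) oP(a | b): componentwise orthogonal projection of a
   onto the (finite-dimensional, hence closed) span of the components of b. *)
Definition is_oP (R : realFieldType) (H : lmodType R) (ip : H -> H -> R)
    (m n : nat) (b : 'I_n -> H) (a pa : 'I_m -> H) : Prop :=
  forall i, in_span b (pa i) /\ forall j, ip (a i - pa i) (b j) = 0.

(* almost sure equality of random vectors: E|u_i - v_i|^2 = 0 for all i *)
Definition as_eq (R : realFieldType) (H : lmodType R) (ip : H -> H -> R)
    (m : nat) (u v : 'I_m -> H) : Prop :=
  forall i, ip (u i - v i) (u i - v i) = 0.

(* Everything reduces
   to the normal equations: if Cov(a, b) = A Cov(b) then A b is a version of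
   oP(a | b), and two elements of the span of b with the same covariance with b
   coincide almost surely.  The only non-routine ingredient is that for any u,
   Cov(u, b) Cov(b)^- Cov(b) = Cov(u, b), whatever the rank of Cov(b): the
   residual directions of Cov(b) carry null random variables, which are
   orthogonal to everything by the degenerate case of Cauchy-Schwarz. *)

From HB Require Import structures.
From mathcomp Require Import all_boot all_order all_algebra.
From Stdlib Require Import ClassicalEpsilon.
From mathcomp Require Import ring.
Set Implicit Arguments. Unset Strict Implicit.
Import Order.TTheory GRing.Theory Num.Theory.
Local Open Scope ring_scope.

Section MoorePenrose.
Variable R : realFieldType.

Lemma row_sqnorm_eq0 k (x : 'rV[R]_k) : x *m x^T = 0 -> x = 0.
Proof.
move=> hx; have h00 : (x *m x^T) 0 0 = 0 by rewrite hx mxE.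
rewrite mxE in h00; apply/rowP => j; rewrite mxE.
have sq_ge0 i : xpredT i -> 0 <= x 0 i * x^T i 0.
  by move=> _; rewrite mxE -expr2 sqr_ge0.
have := @psumr_eq0P R _ xpredT (fun i => x 0 i * x^T i 0) sq_ge0 h00 j isT.
by rewrite mxE -expr2 => /eqP; rewrite sqrf_eq0 => /eqP.
Qed.

Lemma gram_unitmx k n (G : 'M[R]_(k, n)) : row_free G -> G *m G^T \in unitmx.
Proof.
move=> freeG; rewrite -row_free_unit; apply: inj_row_free => v hv.
have : (v *m G) *m (v *m G)^T = 0.
  by rewrite trmx_mul !mulmxA -(mulmxA v) hv mul0mx.
by move/row_sqnorm_eq0 => hvG; apply/eqP; rewrite -(mulmx_free_eq0 _ freeG) hvG.
Qed.

Lemma is_MP_full_rank_factor m r n (F : 'M[R]_(m, r)) (G : 'M[R]_(r, n)) :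
  G *m G^T \in unitmx -> F^T *m F \in unitmx -> exists X, is_MP (F *m G) X.
Proof.
set M := G *m G^T => uM; set N := F^T *m F => uN.
have symM : (invmx M)^T = invmx M by rewrite trmx_inv /M trmx_mul trmxK.
have symN : (invmx N)^T = invmx N by rewrite trmx_inv /N trmx_mul trmxK.
set X := G^T *m invmx M *m invmx N *m F^T; exists X.
have AX : F *m G *m X = F *m invmx N *m F^T.
  by rewrite !mulmxA -(mulmxA F G) -/M -(mulmxA F M) mulmxV // mulmx1.
have XA : X *m (F *m G) = G^T *m invmx M *m G.
  by rewrite !mulmxA -(mulmxA _ F^T F) -/N -(mulmxA _ (invmx N) N) mulVmx // mulmx1.
split.
- by rewrite AX !mulmxA -(mulmxA _ F^T F) -/N -(mulmxA _ (invmx N) N) mulVmx // mulmx1.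
- by rewrite XA !mulmxA -(mulmxA _ G G^T) -/M -(mulmxA _ (invmx M) M) mulVmx // mulmx1.
- by rewrite AX !trmx_mul trmxK symN mulmxA.
- by rewrite XA !trmx_mul trmxK symM mulmxA.
Qed.

(* Every real matrix has a Moore-Penrose inverse (via A = col_base A * row_base A). *)
Lemma is_MP_exists m n (A : 'M[R]_(m, n)) : exists G, is_MP A G.
Proof.
have freeF : row_free (col_base A)^T.
  by rewrite /row_free mxrank_tr; have := col_base_full A; rewrite /row_full.
have uN : (col_base A)^T *m col_base A \in unitmx.
  by have := gram_unitmx freeF; rewrite trmxK.
have [X hX] := is_MP_full_rank_factor (gram_unitmx (row_base_free A)) uN.
by exists X; rewrite -(mulmx_base A).
Qed.

Lemma mpinvP m n (A : 'M[R]_(m, n)) : is_MP A (mpinv A).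
Proof. by apply: epsilon_spec; apply: is_MP_exists. Qed.

End MoorePenrose.

Section L2Calculus.
Variables (R : realFieldType) (H : lmodType R) (ip : H -> H -> R).
Hypothesis hip : is_L2 ip.

Lemma ip0l z : ip 0 z = 0.
Proof.
have [lin _ _] := hip; have := lin 1 0 0 z; rewrite scale1r addr0 mul1r => h.
by have := congr1 (fun t => t - ip 0 z) h; rewrite /= subrr addrK => <-.
Qed.

Lemma ipDl z x y : ip (x + y) z = ip x z + ip y z.
Proof. by have [lin _ _] := hip; rewrite -[x]scale1r lin mul1r scale1r. Qed.

Lemma ipZl z a x : ip (a *: x) z = a * ip x z.
Proof. by have [lin _ _] := hip; rewrite -[a *: x]addr0 lin ip0l addr0. Qed.

Lemma ipBl z x y : ip (x - y) z = ip x z - ip y z.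
Proof. by rewrite ipDl -scaleN1r ipZl mulN1r. Qed.

Lemma ip_suml z n (f : 'I_n -> H) : ip (\sum_j f j) z = \sum_j ip (f j) z.
Proof. exact: (big_morph (fun h => ip h z) (ipDl z) (ip0l z)). Qed.

Lemma ipC x y : ip x y = ip y x.
Proof. by case: hip. Qed.

(* Degenerate Cauchy-Schwarz: a null element is orthogonal to everything.
   Otherwise ip (u + t w) (u + t w) = ip u u + 2 t ip u w is negative for a
   suitable t. *)
Lemma ip_null_orth u w : ip w w = 0 -> ip u w = 0.
Proof.
move=> null_w; have [_ _ pos] := hip.
apply/eqP; apply/negPn/negP => uw_neq0.
set c := ip u w in uw_neq0 *; set d := ip u u.
set t := - (d + 1) / (2 * c).
have := pos (u + t *: w).
have -> : ip (u + t *: w) (u + t *: w) = d + t * c + t * c.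
  rewrite ipDl ipZl (ipC u) (ipC w) ipDl ipZl ipDl ipZl null_w.
  by rewrite (ipC w u) -/c -/d; ring.
have -> : d + t * c + t * c = -1 by rewrite /t; field.
by rewrite ler0N1.
Qed.

Lemma Cov_mxappl k m n (A : 'M[R]_(k, m)) (a : 'I_m -> H) (b : 'I_n -> H) :
  Cov ip (mxapp A a) b = A *m Cov ip a b.
Proof.
apply/matrixP => i j; rewrite !mxE /mxapp ip_suml; apply: eq_bigr => l _.
by rewrite ipZl mxE.
Qed.

Lemma Cov_tr m n (a : 'I_m -> H) (b : 'I_n -> H) : Cov ip b a = (Cov ip a b)^T.
Proof. by apply/matrixP => i j; rewrite !mxE ipC. Qed.

Lemma Cov_mxappr k m n (A : 'M[R]_(k, n)) (a : 'I_m -> H) (b : 'I_n -> H) :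
  Cov ip a (mxapp A b) = Cov ip a b *m A^T.
Proof. by rewrite Cov_tr Cov_mxappl trmx_mul -Cov_tr. Qed.

Lemma CovDl m n (a a' : 'I_m -> H) (b : 'I_n -> H) :
  Cov ip (fun i => a i + a' i) b = Cov ip a b + Cov ip a' b.
Proof. by apply/matrixP => i j; rewrite !mxE ipDl. Qed.

Lemma CovBl m n (a a' : 'I_m -> H) (b : 'I_n -> H) :
  Cov ip (fun i => a i - a' i) b = Cov ip a b - Cov ip a' b.
Proof. by apply/matrixP => i j; rewrite !mxE ipBl. Qed.

Lemma CovDr m n (a : 'I_m -> H) (b b' : 'I_n -> H) :
  Cov ip a (fun i => b i + b' i) = Cov ip a b + Cov ip a b'.
Proof. by rewrite Cov_tr CovDl linearD /= -!Cov_tr. Qed.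

(* Cov(u, b) always lies in the row space of Cov(b): the directions killed by
   Cov(b) Cov(b)^- - 1 carry null random variables. *)
Lemma Cov_mpinv_proj m n (u : 'I_m -> H) (b : 'I_n -> H) :
  Cov ip u b *m mpinv (Cov ip b b) *m Cov ip b b = Cov ip u b.
Proof.
set G := Cov ip b b; set P := 1%:M - mpinv G *m G.
have [GGG _ _ _] := mpinvP G.
have GP0 : G *m P = 0 by rewrite /P mulmxBr mulmx1 mulmxA GGG subrr.
set w := mxapp P^T b.
have null_w k : ip (w k) (w k) = 0.
  have : Cov ip w w = P^T *m (G *m P) by rewrite Cov_mxappl Cov_mxappr trmxK mulmxA.
  by rewrite GP0 mulmx0 => /matrixP /(_ k k); rewrite !mxE.
have : Cov ip u w = 0 by apply/matrixP => i k; rewrite !mxE; apply: ip_null_orth.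
rewrite /w Cov_mxappr trmxK /P mulmxBr mulmx1 mulmxA => /eqP.
by rewrite subr_eq0 => /eqP.
Qed.

Lemma span_mxapp_span m n k (A : 'M[R]_(m, k)) (b : 'I_n -> H) (f : 'I_k -> H) i :
  (forall l, in_span b (f l)) -> in_span b (mxapp A f i).
Proof.
move=> span_f; apply: (big_ind (in_span b)).
- by exists (fun _ => 0); rewrite big1 // => j _; rewrite scale0r.
- move=> _ _ [c ->] [c' ->]; exists (fun j => c j + c' j).
  by rewrite -big_split; apply: eq_bigr => j _; rewrite scalerDl.
- move=> l _; have [c ->] := span_f l; exists (fun j => A i l * c j).
  by rewrite scaler_sumr; apply: eq_bigr => j _; rewrite scalerA.
Qed.

Lemma span_mxapp m n (A : 'M[R]_(m, n)) (b : 'I_n -> H) i : in_span b (mxapp A b i).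
Proof. by exists (A i). Qed.

Lemma span_sub n (b : 'I_n -> H) x y :
  in_span b x -> in_span b y -> in_span b (x - y).
Proof.
move=> [c ->] [c' ->]; exists (fun j => c j - c' j).
by rewrite -sumrB; apply: eq_bigr => j _; rewrite scalerBl.
Qed.

Lemma span_self n (b : 'I_n -> H) l : in_span b (b l).
Proof.
exists (fun j => (j == l)%:R); rewrite (bigD1 l) //= big1 => [|j /negbTE ->].
  by rewrite eqxx scale1r addr0.
by rewrite scale0r.
Qed.

Lemma is_oP_normal_eq m n (b : 'I_n -> H) (a : 'I_m -> H) (A : 'M[R]_(m, n)) :
  Cov ip a b = A *m Cov ip b b -> is_oP ip b a (mxapp A b).
Proof.
move=> normal i; split; first exact: span_mxapp.
move=> j; have := congr1 (fun M : 'M[R]_(m, n) => M i j) (CovBl a (mxapp A b) b).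
by rewrite Cov_mxappl -normal subrr !mxE.
Qed.

Lemma Cov_oP m n (b : 'I_n -> H) (a pa : 'I_m -> H) :
  is_oP ip b a pa -> Cov ip pa b = Cov ip a b.
Proof.
move=> hpa; apply/matrixP => i j; rewrite !mxE.
by have := (hpa i).2 j; rewrite ipBl => /eqP; rewrite subr_eq0 => /eqP.
Qed.

Lemma as_eq_span_Cov m n (b : 'I_n -> H) (u v : 'I_m -> H) :
  (forall i, in_span b (u i)) -> (forall i, in_span b (v i)) ->
  Cov ip u b = Cov ip v b -> as_eq ip u v.
Proof.
move=> span_u span_v same_cov i.
have [c def_uv] : in_span b (u i - v i) by apply: span_sub.
rewrite {1}def_uv ip_suml big1 // => j _; rewrite ipZl ipC ipBl.
have := congr1 (fun M : 'M[R]_(m, n) => M i j) same_cov.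
by rewrite !mxE => ->; rewrite subrr mulr0.
Qed.

End L2Calculus.

Section LinearModel.
Variables (R : realFieldType) (H : lmodType R) (ip : H -> H -> R).
Hypothesis hip : is_L2 ip.
Variables (p q : nat) (X : 'I_p -> H) (eps : 'I_q -> H) (Z : 'M[R]_(q, p)).
Hypothesis Hindep : Cov ip X eps = 0.

Local Notation Y := (fun i => mxapp Z X i + eps i).
Local Notation Sigma := (Cov ip X X).

Lemma Cov_X_Y : Cov ip X Y = Sigma *m Z^T.
Proof. by rewrite CovDr // Cov_mxappr // Hindep addr0. Qed.

Lemma Cov_eps_Y : Cov ip eps Y = Cov ip eps eps.
Proof. by rewrite CovDr // Cov_mxappr // Cov_tr // Hindep trmx0 mul0mx add0r. Qed.

Lemma Cov_Y_Y : Cov ip Y Y = Z *m Sigma *m Z^T + Cov ip eps eps.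
Proof. by rewrite CovDl // Cov_mxappl // Cov_X_Y Cov_eps_Y mulmxA. Qed.

(* Sigma Z^T lies in the row space of B = Z Sigma Z^T = Cov(Z X). *)
Lemma mpinv_B_proj :
  Sigma *m Z^T *m mpinv (Z *m Sigma *m Z^T) *m (Z *m Sigma *m Z^T) = Sigma *m Z^T.
Proof.
have := Cov_mpinv_proj hip X (mxapp Z X).
by rewrite !Cov_mxappr // Cov_mxappl // mulmxA.
Qed.

End LinearModel.

Theorem mainTheorem4 (R : realFieldType) (H : lmodType R) (ip : H -> H -> R)
    (hip : is_L2 ip) (p q : nat)
    (X : 'I_p -> H) (eps : 'I_q -> H)
    (Hindep : Cov ip X eps = 0)
    (Z : 'M[R]_(q, p)) :
  let Sigma := Cov ip X X in
  let V := Cov ip eps eps in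
  let Y : 'I_q -> H := fun i => mxapp Z X i + eps i in
  let B := Z *m Sigma *m Z^T in
  let C := B + V in
  let K := Sigma *m Z^T *m mpinv C in
  let ZSigma := Sigma *m Z^T *m mpinv B in
  [/\ is_oP ip Y eps (mxapp (1%:M - Z *m K) Y),
      is_oP ip Y X (mxapp K Y)
    & forall (pe : 'I_q -> H) (px : 'I_p -> H),
        is_oP ip Y eps pe -> is_oP ip Y X px ->
        as_eq ip px (mxapp ZSigma (fun i => Y i - pe i))].
Proof.
move=> Sigma V Y B C K ZSigma.
have hXY : Cov ip X Y = Sigma *m Z^T := Cov_X_Y hip Z Hindep.
have heY : Cov ip eps Y = V := Cov_eps_Y hip Z Hindep.
have hYY : Cov ip Y Y = C := Cov_Y_Y hip Z Hindep.
(* K C = Sigma Z^T: the normal equations for oP(X | Y). *)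
have KC : K *m C = Sigma *m Z^T by have := Cov_mpinv_proj hip X Y; rewrite hXY hYY.
(* ZSigma B = Sigma Z^T: the normal equations for oP(X | Z X). *)
have ZSigmaB : ZSigma *m B = Sigma *m Z^T := mpinv_B_proj hip X Z.
(* oP(eps | Y): Cov(eps, Y) = V = C - Z K C = (1 - Z K) C. *)
split.
- apply: is_oP_normal_eq => //; rewrite heY hYY mulmxBl mul1mx -mulmxA KC mulmxA.
  by rewrite addrC addKr.
- by apply: is_oP_normal_eq => //; rewrite hXY hYY.
(* Both px and ZSigma (Y - pe) lie in span Y and have covariance Sigma Z^T
   with Y, the latter because Cov(Y - pe, Y) = C - V = B. *)
move=> pe px hpe hpx; apply: (as_eq_span_Cov hip (b := Y)).
- by move=> i; exact: (hpx i).1.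
- move=> i; apply: span_mxapp_span => l.
  by apply: span_sub; [exact: span_self | exact: (hpe l).1].
- rewrite Cov_mxappl // CovBl // (Cov_oP hip hpx) (Cov_oP hip hpe) hXY heY hYY.
  by rewrite /C addrK ZSigmaB.
Qed.
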